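(* Let $\epsilon>0$ and $0<p\le 1$. Every $(p,\epsilon p)$-quasirandom bipartite graph is $(2\epsilon^{1/7})$-regular.
   Context: A bipartite graph $G=(U,V;E)$ is regular if all vertices in $U$ have the same degree and all vertices in $V$ have the same degree; its density is $|E|/(|U||V|)$. $d_G(A,B)=e_G(A,B)/(|A||B|)$ for $A\subseteq U$, $B\subseteq V$, where $e_G(A,B)$ is the number of edges between $A$ and $B$. For $u,u'\in U$, $\mathrm{codeg}(u,u')$ is the number of common neighbours of $u,u'$ in $V$. A regular bipartite graph $G=(U,V;E)$ of density $p$ is $(p,\delta)$-quasirandom if all but at most $\delta|U|^2$ ordered pairs $(u,u')\in U^2$ satisfy $\mathrm{codeg}(u,u')\le(1+\delta)p^2|V|$. A bipartite graph $G=(U,V;E)$ of density $p$ is $(\epsilon)$-regular if all $A\subseteq U$, $B\subseteq V$ with $|A|\ge\epsilon|U|$, $|B|\ge\epsilon|V|$ satisfy $|d_G(A,B)-p|\le\epsilon p$. *)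

From HB Require Import structures.
From mathcomp Require Import all_boot all_order all_algebra.
From mathcomp Require Import reals exp.
Set Implicit Arguments. Unset Strict Implicit. Unset Printing Implicit Defensive.
Import Order.TTheory GRing.Theory Num.Theory.
Local Open Scope ring_scope.

Section BipGraph.
Variables (R : realType) (U V : finType) (adj : U -> V -> bool).

Definition e_G (A : {set U}) (B : {set V}) : nat :=
  #|[set uv : U * V | [&& uv.1 \in A, uv.2 \in B & adj uv.1 uv.2]]|.

Definition d_G (A : {set U}) (B : {set V}) : R :=
  (e_G A B)%:R / (#|A| * #|B|)%:R.

Definition bdensity : R := d_G [set: U] [set: V].

Definition degU (u : U) : nat := #|[set v | adj u v]|.
Definition degV (v : V) : nat := #|[set u | adj u v]|.

Definition bip_regular : Prop :=
  (exists dU, forall u, degU u = dU) /\ (exists dV, forall v, degV v = dV).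

Definition codeg (u u' : U) : nat := #|[set v | adj u v && adj u' v]|.

Definition quasirandom (p delta : R) : Prop :=
  [/\ bip_regular, bdensity = p &
      (#|[set uu : U * U | (1 + delta) * p ^+ 2 * #|V|%:R < (codeg uu.1 uu.2)%:R]|%:R
         <= delta * (#|U|%:R) ^+ 2)].

Definition eps_regular (eps : R) : Prop :=
  forall (A : {set U}) (B : {set V}),
    eps * #|U|%:R <= #|A|%:R -> eps * #|V|%:R <= #|B|%:R ->
    `|d_G A B - bdensity| <= eps * bdensity.

End BipGraph.

From HB Require Import structures.
From mathcomp Require Import all_boot all_order all_algebra.
From mathcomp Require Import reals exp.
From mathcomp Require Import ring lra.
Set Implicit Arguments. Unset Strict Implicit. Unset Printing Implicit Defensive.
Import Order.TTheory GRing.Theory Num.Theory.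
Local Open Scope ring_scope.

(** Let x_v be the number of neighbours of v in A.  By regularity of the U side
    the x_v have mean p|A|, and their second moment is the sum of the codegrees
    over A x A, which quasirandomness bounds by (1 + eps p) p^2 |V| |A|^2 plus the
    at most eps p |U|^2 exceptional pairs, each of codegree at most p|V|.  So the
    variance of x is at most eps p^2 |V| (|A|^2 + |U|^2), and Cauchy-Schwarz over B
    gives (e(A,B) - p|A||B|)^2 <= |B| eps p^2 |V| (|A|^2 + |U|^2).  For
    |A| >= 2 eps^(1/7) |U| and |B| >= 2 eps^(1/7) |V| the right-hand side is at
    most (2 eps^(1/7) p |A| |B|)^2. *)

Section FiniteSums.
Variables (R : realFieldType) (T : finType).

Lemma card_set_sum (P : pred T) : #|[set x | P x]|%:R = \sum_x (P x)%:R :> R.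
Proof.
rewrite -sum1_card natr_sum big_mkcond /=; apply: eq_bigr => x _.
by rewrite inE; case: (P x).
Qed.

Lemma sum_le_sumT (P : pred T) (f : T -> R) :
  (forall i, 0 <= f i) -> \sum_(i | P i) f i <= \sum_i f i.
Proof. by move=> f_ge0; rewrite [leRHS](bigID P) /= lerDl sumr_ge0. Qed.

Lemma CauchySchwarz_sum (A : {set T}) (y : T -> R) :
  (\sum_(i in A) y i) ^+ 2 <= #|A|%:R * \sum_(i in A) y i ^+ 2.
Proof.
set S := \sum_(i in A) y i; set Q := \sum_(i in A) y i ^+ 2.
have row_sum i : \sum_(j in A) (y i - y j) ^+ 2 = #|A|%:R * y i ^+ 2 - 2 * y i * S + Q.
  under eq_bigr => j _ do rewrite sqrrB.
  rewrite !big_split /= sumrN sumr_const mulr_sumr.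
  by congr (_ - _ + _); [ring | apply: eq_bigr => j _; ring].
(* Lagrange: the double sum of the squared differences is 2 (|A| Q - S^2). *)
have : 0 <= \sum_(i in A) \sum_(j in A) (y i - y j) ^+ 2.
  by do 2!apply: sumr_ge0 => ? _; exact: sqr_ge0.
under eq_bigr => i _ do rewrite row_sum.
rewrite !big_split /= sumrN sumr_const -mulr_sumr -!mulr_suml -mulr_sumr -/S -/Q -mulr_natl.
nra.
Qed.

Lemma sum_sqr_subr_mean (x : T -> R) (c : R) :
    \sum_i x i = #|T|%:R * c ->
  \sum_i (x i - c) ^+ 2 = \sum_i x i ^+ 2 - #|T|%:R * c ^+ 2.
Proof.
move=> sum_x; under eq_bigr => i _ do rewrite sqrrB.
rewrite !big_split /= sumrN sumrMnl -mulr_suml sum_x sumr_const.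
rewrite (_ : #|xpredT| = #|T|) // -mulr_natr.
ring.
Qed.

End FiniteSums.

Section BipartiteCounting.
Variables (R : realFieldType) (U V : finType) (adj : U -> V -> bool).

Definition deg_in (A : {set U}) (v : V) : nat := #|[set u in A | adj u v]|.

Lemma deg_in_sum (A : {set U}) (v : V) :
  (deg_in A v)%:R = \sum_(u in A) (adj u v)%:R :> R.
Proof.
rewrite /deg_in card_set_sum [RHS]big_mkcond /=.
by apply: eq_bigr => u _; case: (u \in A).
Qed.

Lemma e_G_sum_deg_in (A : {set U}) (B : {set V}) :
  (e_G adj A B)%:R = \sum_(v in B) (deg_in A v)%:R :> R.
Proof.
under [RHS]eq_bigr => v _ do rewrite deg_in_sum.
rewrite /e_G card_set_sum exchange_big pair_big [RHS]big_mkcond /=.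
by apply: eq_bigr => -[u v] _ /=; case: (u \in A); case: (v \in B).
Qed.

Lemma degU_sum (u : U) : (degU adj u)%:R = \sum_v (adj u v)%:R :> R.
Proof. by rewrite /degU card_set_sum. Qed.

Lemma sum_sqr_deg_in (A : {set U}) :
  \sum_v (deg_in A v)%:R ^+ 2 = \sum_(u in A) \sum_(u' in A) (codeg adj u u')%:R :> R.
Proof.
under eq_bigr => v _ do rewrite expr2 deg_in_sum big_distrlr.
rewrite exchange_big; apply: eq_bigr => u _; rewrite exchange_big; apply: eq_bigr => u' _.
rewrite /codeg card_set_sum; apply: eq_bigr => v _ /=.
by case: (adj u v); case: (adj u' v); rewrite ?mulr1 ?mulr0.
Qed.

Lemma codeg_le_degU (u u' : U) : (codeg adj u u' <= degU adj u)%N.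
Proof. by apply/subset_leq_card/subsetP => v; rewrite !inE => /andP[]. Qed.

End BipartiteCounting.

Section RegularSide.
Variables (R : realFieldType) (U V : finType) (adj : U -> V -> bool) (p : R).
Hypothesis degU_eq : forall u, (degU adj u)%:R = p * #|V|%:R.

Lemma sum_deg_in (A : {set U}) : \sum_v (deg_in adj A v)%:R = #|V|%:R * (#|A|%:R * p).
Proof.
under eq_bigr => v _ do rewrite deg_in_sum.
rewrite exchange_big /=; under eq_bigr => u _ do rewrite -degU_sum degU_eq.
by rewrite sumr_const -mulr_natr; ring.
Qed.

Lemma sum_codeg_le (A : {set U}) (K : R) : 0 <= K -> 0 <= p ->
  \sum_(u in A) \sum_(u' in A) (codeg adj u u')%:R <=
  #|A|%:R ^+ 2 * K + p * #|V|%:R * #|[set uu : U * U | K < (codeg adj uu.1 uu.2)%:R]|%:R.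
Proof.
move=> K_ge0 p_ge0.
have codeg_le u u' :
    (codeg adj u u')%:R <= K + p * #|V|%:R * (K < (codeg adj u u')%:R)%R%:R.
  have : (codeg adj u u')%:R <= p * #|V|%:R by rewrite -(degU_eq u) ler_nat codeg_le_degU.
  by case: ltrP; rewrite ?mulr1 ?mulr0 ?addr0 //; lra.
apply: le_trans (ler_sum _ (fun u _ => ler_sum _ (fun u' _ => codeg_le u u'))) _.
under eq_bigr => u _ do rewrite big_split /= sumr_const -mulr_sumr.
rewrite big_split /= sumr_const -mulr_sumr.
rewrite (_ : K *+ #|A| *+ #|A| = #|A|%:R ^+ 2 * K) ?lerD2l; last by ring.
by rewrite ler_wpM2l ?mulr_ge0 // pair_big card_set_sum sum_le_sumT.
Qed.

Lemma e_G_dev_sqr_le (A : {set U}) (B : {set V}) :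
  ((e_G adj A B)%:R - p * #|A|%:R * #|B|%:R) ^+ 2 <=
  #|B|%:R * (\sum_v (deg_in adj A v)%:R ^+ 2 - #|V|%:R * (#|A|%:R * p) ^+ 2).
Proof.
have -> : (e_G adj A B)%:R - p * #|A|%:R * #|B|%:R =
          \sum_(v in B) ((deg_in adj A v)%:R - #|A|%:R * p).
  by rewrite sumrB sumr_const e_G_sum_deg_in -mulr_natr; ring.
rewrite -(sum_sqr_subr_mean (sum_deg_in A)).
apply: le_trans (CauchySchwarz_sum _ _) _.
by rewrite ler_wpM2l // sum_le_sumT // => v; exact: sqr_ge0.
Qed.

Lemma quasirandom_e_G_dev_sqr_le (delta : R) (A : {set U}) (B : {set V}) :
    0 <= delta -> 0 <= p ->
    #|[set uu : U * U | (1 + delta) * p ^+ 2 * #|V|%:R < (codeg adj uu.1 uu.2)%:R]|%:R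
      <= delta * #|U|%:R ^+ 2 ->
  ((e_G adj A B)%:R - p * #|A|%:R * #|B|%:R) ^+ 2 <=
  #|B|%:R * (delta * p * #|V|%:R * (p * #|A|%:R ^+ 2 + #|U|%:R ^+ 2)).
Proof.
move=> delta_ge0 p_ge0 bad_le.
apply: (le_trans (e_G_dev_sqr_le A B)); rewrite ler_wpM2l // sum_sqr_deg_in.
have K_ge0 : 0 <= (1 + delta) * p ^+ 2 * #|V|%:R by rewrite !mulr_ge0 ?sqr_ge0 ?addr_ge0.
have pm_ge0 : 0 <= p * #|V|%:R by rewrite mulr_ge0.
have := sum_codeg_le A K_ge0 p_ge0; have := ler_wpM2l pm_ge0 bad_le.
lra.
Qed.

End RegularSide.

Lemma ratio_dev_le (R : realFieldType) (eps t p a b n m e : R) :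
    0 < t -> t ^+ 7 = eps -> 0 < p -> p <= 1 -> 0 < n -> 0 < m ->
    2 * t * n <= a -> a <= n -> 2 * t * m <= b ->
    (e - p * a * b) ^+ 2 <= b * (eps * p * p * m * (p * a ^+ 2 + n ^+ 2)) ->
  `|e / (a * b) - p| <= 2 * t * p.
Proof.
move=> t_gt0 <- p_gt0 p_le1 n_gt0 m_gt0 tn_le_a a_le_n tm_le_b dev_le.
have a_gt0 : 0 < a by apply: lt_le_trans tn_le_a; rewrite !mulr_gt0.
have b_gt0 : 0 < b by apply: lt_le_trans tm_le_b; rewrite !mulr_gt0.
have t_sqr : 4 * t ^+ 2 <= 1.
  have : 2 * t <= 1 by rewrite -(ler_pM2r n_gt0) mul1r (le_trans tn_le_a).
  nra.
have key : t ^+ 7 * m * (p * a ^+ 2 + n ^+ 2) <= 4 * t ^+ 2 * a ^+ 2 * b.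
  have tn_ge0 : 0 <= 2 * t * n by rewrite ltW // !mulr_gt0.
  have tn_sqr : (2 * t * n) ^+ 2 <= a ^+ 2 by rewrite ler_sqr // nnegrE (le_trans tn_ge0).
  have tpa_sqr : t ^+ 2 * (p * a ^+ 2) <= t ^+ 2 * a ^+ 2.
    by rewrite ler_wpM2l ?sqr_ge0 ?ler_piMl ?sqr_ge0.
  have ta_sqr : a ^+ 2 * (4 * t ^+ 2) <= a ^+ 2 * 1 by rewrite ler_wpM2l ?sqr_ge0.
  have t_sqr_sum : 2 * (t ^+ 2 * (p * a ^+ 2 + n ^+ 2)) <= a ^+ 2 by lra.
  have t5m_ge0 : 0 <= t ^+ 5 * m by rewrite mulr_ge0 ?exprn_ge0 ?ltW.
  have t3ma_ge0 : 0 <= t ^+ 3 * m * a ^+ 2 by rewrite !mulr_ge0 ?exprn_ge0 ?sqr_ge0 ?ltW.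
  have t2a_ge0 : 0 <= 4 * t ^+ 2 * a ^+ 2 by rewrite !mulr_ge0 ?exprn_ge0 ?sqr_ge0 ?ltW.
  have := ler_wpM2l t5m_ge0 t_sqr_sum; have := ler_wpM2l t3ma_ge0 t_sqr.
  have := ler_wpM2l t2a_ge0 tm_le_b.
  lra.
have dev_abs : `|e - p * a * b| <= 2 * t * p * a * b.
  have tpab_ge0 : 0 <= 2 * t * p * a * b by rewrite ltW // !mulr_gt0.
  rewrite -ler_sqr ?nnegrE // real_normK ?num_real //.
  apply: le_trans dev_le _.
  have p2b_ge0 : 0 <= p ^+ 2 * b by rewrite mulr_ge0 ?sqr_ge0 ?ltW.
  have := ler_wpM2l p2b_ge0 key.
  lra.
have -> : e / (a * b) - p = (e - p * a * b) / (a * b).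
  by field; rewrite !gt_eqF.
have ab_gt0 : 0 < a * b by rewrite mulr_gt0.
by rewrite normrM normfV (gtr0_norm ab_gt0) ler_pdivrMr // mulrA.
Qed.

Section Density.
Variables (R : realType) (U V : finType) (adj : U -> V -> bool).

Lemma e_G_setT : (e_G adj setT setT)%:R = \sum_u (degU adj u)%:R :> R.
Proof.
rewrite e_G_sum_deg_in; under eq_bigr => v _ do rewrite deg_in_sum.
rewrite exchange_big; apply: eq_big => [u | u _]; first by rewrite inE.
by rewrite degU_sum; apply: eq_bigl => v; rewrite inE.
Qed.

Lemma bdensity_gt0_cards : 0 < bdensity R adj -> (0 < #|U|)%N && (0 < #|V|)%N.
Proof.
rewrite /bdensity /d_G !cardsT -muln_gt0; apply: contraTT; rewrite -leqNgt leqn0.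
by move=> /eqP ->; rewrite invr0 mulr0 ltxx.
Qed.

Lemma bdensity_regularU (dU : nat) : (forall u, degU adj u = dU) -> (0 < #|U|)%N ->
  bdensity R adj = dU%:R / #|V|%:R.
Proof.
move=> degUE U_gt0; rewrite /bdensity /d_G !cardsT e_G_setT.
under eq_bigr => u _ do rewrite degUE.
rewrite sumr_const (_ : #|xpredT| = #|U|) // -[_ *+ #|U|]mulr_natl natrM invfM mulrACA.
by rewrite mulfV ?mul1r // pnatr_eq0 -lt0n.
Qed.

End Density.

Theorem lemma5p5 (R : realType) (U V : finType) (adj : U -> V -> bool)
    (eps p : R) :
  0 < eps -> 0 < p -> p <= 1 ->
  quasirandom adj p (eps * p) ->
  eps_regular adj (2 * eps `^ (7%:R)^-1).
Proof.
move=> eps_gt0 p_gt0 p_le1 [[[dU degUE] _] densE bad_le] A B tn_le_a tm_le_b.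
have /bdensity_gt0_cards/andP[U_gt0 V_gt0] : 0 < bdensity R adj by rewrite densE.
have degU_eq u : (degU adj u)%:R = p * #|V|%:R.
  by rewrite degUE -densE (bdensity_regularU _ degUE U_gt0) mulfVK // pnatr_eq0 -lt0n.
have t7 : (eps `^ 7%:R^-1) ^+ 7 = eps.
  by rewrite -powR_mulrn ?powR_ge0 // -powRrM mulVf ?powRr1 ?ltW // pnatr_eq0.
rewrite /d_G densE natrM.
apply: (ratio_dev_le (powR_gt0 _ eps_gt0) t7 p_gt0 p_le1 _ _ tn_le_a _ tm_le_b).
- by rewrite ltr0n.
- by rewrite ltr0n.
- by rewrite ler_nat max_card.
- apply: quasirandom_e_G_dev_sqr_le bad_le => //; last exact: ltW.
  by rewrite mulr_ge0 ?ltW.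
Qed.
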